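(* Let $M\ge0$. There is no infinite antichain $S_1,S_2,\dots$ in $(\mathrm{RL},\le_{RL})$, with $S_i$ of type $(d_i,n_i)$, for which the sequence $(d_i)_i$ is bounded.
   Context: Fix an integer $M\ge0$. A reading list of type $(d,n)$ is a tuple $S=(S^1,\dots,S^n)$ of $d$-element subsets of $[Md]=\{1,\dots,Md\}$ (each $S^i$ viewed as an increasing word). $\mathrm{RL}$ denotes the set of all reading lists of all types. For $S=(S^1,\dots,S^n)$ of type $(d,n)$ and $T=(T^1,\dots,T^m)$ of type $(e,m)$, define $S\le_{RL}T$ iff there exist indices $1\le k_1<k_2<\cdots<k_n\le m$ and maps $f_i:S^i\to T^{k_i}$ ($i=1,\dots,n$), each strictly increasing, such that $f_i(x)=f_j(x)$ for all $i,j$ and all $x\in S^i\cap S^j$. An antichain is a sequence of pairwise incomparable elements. *)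

From mathcomp Require Import all_boot.
Set Implicit Arguments. Unset Strict Implicit. Unset Printing Implicit Defensive.

(* A reading list of type (d,n) with parameter M: a list of n words, each the
   increasing word of a d-element subset of [Md] = {1,...,M*d}. *)
Definition is_reading_list (M d : nat) (S : seq (seq nat)) : bool :=
  all (fun s => [&& sorted ltn s, size s == d & all (fun x => 1 <= x <= M * d) s]) S.

(* S <=_RL T : there are indices k_0 < ... < k_{n-1} < size T (0-based) and
   maps f_i : S^i -> T^{k_i}, strictly increasing, agreeing on intersections. *)
Definition rl_le (S T : seq (seq nat)) : Prop :=
  exists k : nat -> nat,
    (forall i, i.+1 < size S -> k i < k i.+1) /\
    (forall i, i < size S -> k i < size T) /\
    exists f : nat -> nat -> nat,
      (forall i x, i < size S -> x \in nth [::] S i ->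
                   f i x \in nth [::] T (k i)) /\
      (forall i x y, i < size S -> x \in nth [::] S i -> y \in nth [::] S i ->
                     x < y -> f i x < f i y) /\
      (forall i j x, i < size S -> j < size S ->
                     x \in nth [::] S i -> x \in nth [::] S j -> f i x = f j x).

(* Proof idea: when d_i <= B, every word of S_i is a subset of [1, M B], so the
   S_i are words over a finite alphabet.  By Higman's lemma some S_i is a
   subsequence of some S_j with i < j, and a subsequence embeds in the sense of
   <=_RL with all f_i the identity.  Higman's lemma follows from Nash-Williams'
   minimal bad sequence argument: choose each word of a bad sequence as short as
   possible; infinitely many of its words start with the same letter a, and
   deleting that a from them yields a bad sequence that is shorter at its first
   modified position, a contradiction. *)
From Stdlib Require Import Classical ClassicalEpsilon.
From mathcomp Require Import all_boot.

Set Implicit Arguments.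
Unset Strict Implicit.
Unset Printing Implicit Defensive.

Lemma ex_least_nat (P : nat -> Prop) : (exists n, P n) ->
  exists2 n, P n & forall k, P k -> n <= k.
Proof.
case=> n; elim/ltn_ind: n => n IHn Pn.
case: (classic (exists2 k, k < n & P k)) => [[k ltkn Pk]|no_less].
  exact: IHn ltkn Pk.
exists n => // k Pk; rewrite leqNgt; apply/negP=> ltkn; apply: no_less.
by exists k.
Qed.

Lemma pigeonhole_infinitely_often (T : eqType) (L : seq T) (h : nat -> T) :
  (forall n, h n \in L) -> exists a, forall N, exists2 n, N <= n & h n = a.
Proof.
suff: forall N0, (forall n, N0 <= n -> h n \in L) ->
    exists a, forall N, exists2 n, N <= n & h n = a.
  by move=> /(_ 0) infL hL; apply: infL.
elim: L => [|x L IHL] N0 hL; first by have := hL N0 (leqnn N0).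
case: (classic (forall N, exists2 n, N <= n & h n = x)) => [|/not_all_ex_not [N1 no_x]].
  by exists x.
apply: (IHL (maxn N0 N1)) => n; rewrite geq_max => /andP[N0n N1n].
have := hL n N0n; rewrite in_cons => /orP[/eqP hnx|] //.
by case: no_x; exists n.
Qed.

Lemma ex_increasing_enum (P : nat -> Prop) :
  (forall N, exists2 n, N <= n & P n) ->
  exists2 phi : nat -> nat, forall k, P (phi k) & {homo phi : m n / m < n}.
Proof.
move=> infP.
have {}infP N : exists n, N <= n /\ P n by case: (infP N) => n; exists n.
pose next N := proj1_sig (constructive_indefinite_description _ (infP N)).
have nextP N : N <= next N /\ P (next N).
  by rewrite /next; case: constructive_indefinite_description => n [].
pose phi k := iter k (fun m => next m.+1) (next 0).
exists phi; first by case=> [|k]; apply: (nextP _).2.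
by apply: homo_ltn; [exact: ltn_trans | move=> k; apply: (nextP _).1].
Qed.

Section Higman.

Variables (T : eqType) (L : seq T).

Definition words_over (h : nat -> seq T) := forall n, all (mem L) (h n).

Definition bad (h : nat -> seq T) := forall i j, i < j -> ~ subseq (h i) (h j).

Definition bad_prefix (l : seq (seq T)) :=
  exists2 h, words_over h /\ bad h & forall i, i < size l -> h i = nth [::] l i.

Definition splice (w : nat -> seq T) (phi : nat -> nat) i :=
  if i < phi 0 then w i else behead (w (phi (i - phi 0))).

Lemma words_over_splice w phi : words_over w -> words_over (splice w phi).
Proof.
move=> wL i; rewrite /splice; case: ifP => _ //.
by case: (w _) (wL (phi (i - phi 0))) => //= x s /andP[].
Qed.

Lemma bad_splice w phi a : bad w -> {homo phi : m n / m < n} ->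
  (forall k, w (phi k) = a :: behead (w (phi k))) -> bad (splice w phi).
Proof.
move=> bad_w phi_lt head_a i j lt_ij; rewrite /splice.
case: (ltnP i (phi 0)) => [lt_i|le_i]; case: (ltnP j (phi 0)) => [lt_j|le_j].
- exact: bad_w.
- move=> sub; apply: (bad_w i (phi (j - phi 0))).
    exact: leq_trans lt_i (ltnW_homo phi_lt (leq0n _)).
  apply: subseq_trans sub _.
  by case: (w (phi (j - phi 0))) => // x s; apply: subseq_cons.
- by have := leq_ltn_trans le_i (ltn_trans lt_ij lt_j); rewrite ltnn.
- have lt_phi : phi (i - phi 0) < phi (j - phi 0).
    by apply: phi_lt; rewrite ltn_sub2rE.
  move=> sub; apply: (bad_w _ _ lt_phi).
  by rewrite head_a [w (phi (j - _))]head_a /= eqxx.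
Qed.

Lemma bad_prefix_rcons l : bad_prefix l -> exists w, bad_prefix (rcons l w).
Proof.
case=> h hbad hl; exists (h (size l)), h => // i.
rewrite size_rcons ltnS leq_eqVlt nth_rcons => /orP[/eqP ->|lt_il].
  by rewrite ltnn eqxx.
by rewrite lt_il hl.
Qed.

Lemma ex_shortest_extension l : exists w, bad_prefix l ->
  bad_prefix (rcons l w) /\ forall w', bad_prefix (rcons l w') -> size w <= size w'.
Proof.
case: (classic (bad_prefix l)) => [/bad_prefix_rcons ext|]; last by exists [::].
have [w0 lw0] := ext.
have [|_ [w <- lw] least] :=
    ex_least_nat (P := fun n => exists2 w, size w = n & bad_prefix (rcons l w)).
  by exists (size w0), w0.
by exists w => _; split=> // w' lw'; apply: least; exists w'.
Qed.

Definition shortest_extension l :=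
  proj1_sig (constructive_indefinite_description _ (ex_shortest_extension l)).

Lemma shortest_extensionP l : bad_prefix l ->
  bad_prefix (rcons l (shortest_extension l)) /\
  forall w, bad_prefix (rcons l w) -> size (shortest_extension l) <= size w.
Proof. by rewrite /shortest_extension; case: constructive_indefinite_description. Qed.

Fixpoint min_bad_prefix n :=
  if n is n'.+1 then rcons (min_bad_prefix n') (shortest_extension (min_bad_prefix n'))
  else [::].

Definition min_bad n := shortest_extension (min_bad_prefix n).

Lemma size_min_bad_prefix n : size (min_bad_prefix n) = n.
Proof. by elim: n => //= n IHn; rewrite size_rcons IHn. Qed.

Lemma nth_min_bad_prefix n i : i < n -> nth [::] (min_bad_prefix n) i = min_bad i.
Proof.
elim: n => // n IHn; rewrite ltnS leq_eqVlt /= nth_rcons size_min_bad_prefix.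
by case/orP=> [/eqP ->|lt_in]; rewrite ?ltnn ?eqxx // lt_in IHn.
Qed.

Section MinimalBadSequence.

Hypothesis ex_bad : exists2 g, words_over g & bad g.

Lemma bad_prefix_min_bad_prefix n : bad_prefix (min_bad_prefix n).
Proof.
elim: n => [|n IHn]; last exact: (shortest_extensionP IHn).1.
by case: ex_bad => g; exists g.
Qed.

Lemma min_bad_minimal n w :
  bad_prefix (rcons (min_bad_prefix n) w) -> size (min_bad n) <= size w.
Proof. exact: (shortest_extensionP (bad_prefix_min_bad_prefix n)).2. Qed.

Lemma min_bad_extends n :
  exists2 h, words_over h /\ bad h & forall i, i <= n -> h i = min_bad i.
Proof.
have [h hbad hn] := bad_prefix_min_bad_prefix n.+1.
by exists h => // i le_in; rewrite hn ?size_min_bad_prefix // nth_min_bad_prefix.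
Qed.

Lemma words_over_min_bad : words_over min_bad.
Proof. by move=> n; have [h [hL _] <-] := min_bad_extends n. Qed.

Lemma bad_min_bad : bad min_bad.
Proof.
move=> i j lt_ij; have [h [_ bad_h] hj] := min_bad_extends j.
by rewrite -!hj ?(ltnW lt_ij) //; apply: bad_h.
Qed.

Lemma bad_prefix_behead_min_bad phi a : {homo phi : m n / m < n} ->
  (forall k, min_bad (phi k) = a :: behead (min_bad (phi k))) ->
  bad_prefix (rcons (min_bad_prefix (phi 0)) (behead (min_bad (phi 0)))).
Proof.
move=> phi_lt head_a; exists (splice min_bad phi).
  split; first exact/words_over_splice/words_over_min_bad.
  exact: bad_splice bad_min_bad phi_lt head_a.
move=> i; rewrite size_rcons size_min_bad_prefix ltnS leq_eqVlt nth_rcons.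
rewrite size_min_bad_prefix /splice.
by case/orP=> [/eqP ->|lt_i]; rewrite ?ltnn ?eqxx ?subnn // lt_i nth_min_bad_prefix.
Qed.

End MinimalBadSequence.

Theorem higman g : words_over g -> exists i j, i < j /\ subseq (g i) (g j).
Proof.
move=> gL; apply: NNPP => good_g.
have ex_bad : exists2 h, words_over h & bad h.
  by exists g => // i j lt_ij sub_ij; apply: good_g; exists i, j.
have bad_w := bad_min_bad ex_bad.
have w_nonempty n : min_bad n != [::].
  by apply/eqP=> wn; apply: (bad_w n n.+1) => //; rewrite wn sub0seq.
have [x0 _] : exists x0 : T, True by case: (min_bad 0) (w_nonempty 0) => // x; exists x.
have [a inf_a] : exists a, forall N, exists2 n, N <= n & head x0 (min_bad n) = a.
  apply: (@pigeonhole_infinitely_often _ L) => n.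
  by case: (min_bad n) (words_over_min_bad ex_bad n) (w_nonempty n) => //= x s /andP[].
have [phi phi_a phi_lt] := ex_increasing_enum inf_a.
have head_a k : min_bad (phi k) = a :: behead (min_bad (phi k)).
  by case: (min_bad _) (phi_a k) (w_nonempty (phi k)) => //= x s ->.
have := min_bad_minimal ex_bad (bad_prefix_behead_min_bad ex_bad phi_lt head_a).
by case: (min_bad (phi 0)) (w_nonempty (phi 0)) => //= x s _; rewrite ltnn.
Qed.

End Higman.

Lemma sorted_subset_subseq (T : eqType) (leT : rel T) (s t : seq T) :
  transitive leT -> irreflexive leT -> sorted leT s -> sorted leT t ->
  {subset s <= t} -> subseq s t.
Proof.
move=> leT_tr leT_irr s_sorted t_sorted sub_st.
have -> : s = filter (mem s) t.
  apply: (irr_sorted_eq leT_tr leT_irr) => //; first exact: sorted_filter.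
  by move=> x; rewrite mem_filter /=; case: (boolP (x \in s)) => // /sub_st ->.
exact: filter_subseq.
Qed.

Definition subseqs (T : eqType) (r : seq T) : seq (seq T) :=
  [seq mask (val m) r | m : (size r).-tuple bool].

Lemma mem_subseqs (T : eqType) (s r : seq T) : subseq s r -> s \in subseqs r.
Proof.
case/subseqP=> m size_m ->.
by apply/mapP; exists (Tuple (introT eqP size_m)); rewrite ?mem_enum.
Qed.

Lemma subseq_nth_index (T : eqType) (x0 : T) (s t : seq T) : subseq s t ->
  exists2 idx : seq nat, sorted ltn idx /\ all (gtn (size t)) idx &
    s = map (nth x0 t) idx.
Proof.
case/subseqP=> m _ ->; exists (mask m (iota 0 (size t))).
  split; first exact/sorted_mask/iota_ltn_sorted/ltn_trans.
  by apply/allP=> i /mem_mask; rewrite mem_iota.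
by rewrite map_mask -/(mkseq _ _) mkseq_nth.
Qed.

Lemma subseq_rl_le (S T : seq (seq nat)) : subseq S T -> rl_le S T.
Proof.
case/(subseq_nth_index [::])=> idx [idx_sorted idx_lt] ->.
exists (nth 0 idx); rewrite size_map; split; [|split].
- by move=> i lti; apply: (sorted_ltn_nth ltn_trans) => //; rewrite inE // ltnW.
- by move=> i lti; apply: (allP idx_lt); rewrite mem_nth.
exists (fun _ x => x); split; [|split] => // i x lti.
by rewrite (nth_map 0).
Qed.

Lemma reading_list_subseq_iota M d B S s : d <= B ->
  is_reading_list M d S -> s \in S -> subseq s (iota 1 (M * B)).
Proof.
move=> le_dB /allP RL /RL /and3P[s_sorted _ /allP s_range].
apply: (sorted_subset_subseq ltn_trans ltnn) => //; first exact: iota_ltn_sorted.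
move=> x /s_range /andP[x_pos le_x]; rewrite mem_iota x_pos add1n ltnS.
exact: leq_trans le_x (leq_mul (leqnn M) le_dB).
Qed.

Theorem mainTheorem6 (M : nat) (d : nat -> nat) (S : nat -> seq (seq nat)) :
  (forall i, is_reading_list M (d i) (S i)) ->
  (exists B, forall i, d i <= B) ->
  ~ (forall i j, i <> j -> ~ rl_le (S i) (S j)).
Proof.
move=> RL [B le_dB] antichain.
have words_S : words_over (subseqs (iota 1 (M * B))) S.
  move=> n; apply/allP=> s sS.
  exact/mem_subseqs/(reading_list_subseq_iota (le_dB n) (RL n) sS).
have [i [j [lt_ij sub_ij]]] := higman words_S.
apply: (antichain i j); last exact: subseq_rl_le.
by move=> eq_ij; rewrite eq_ij ltnn in lt_ij.
Qed.
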